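(* Let $f(x)=x^5+px^4+qx^3+rx^2+sx+t$ with real coefficients and let $D$, $L_1$, $L_2$, $L_3$ be as in the context. Then $f$ has a quintuple root (i.e. $f(x)=(x-a)^5$ for some $a$) if and only if $D=0$, $L_1=0$, $L_2=0$ and $L_3=0$.
   Context: Let $\alpha_1,\dots,\alpha_5\in\mathbb{C}$ be the roots of $f$ listed with multiplicity. $D=\prod_{1\le i<j\le 5}(\alpha_i-\alpha_j)^2$ is the discriminant of $f$. $L_3=2p^2-5q$. $L_2=40qs-16p^2s-8rp^3+38rpq+3p^2q^2-12q^3-45r^2$. $L_1=-264ps^2r-12p^3tq^2+36r^3pq-124srpq^2+28srp^3q+260sptq-132p^2qrt+240pr^2t+234sqr^2+32p^4tr+48ptq^3-56sp^3t-80q^2rt+194qs^2p^2-600str-6q^3sp^2+2p^2q^2r^2-12sr^2p^2-54r^4+320s^3-8q^3r^2-8r^3p^3+250qt^2-176q^2s^2+24q^4s-36p^4s^2-100p^2t^2$. *)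

From HB Require Import structures.
From mathcomp Require Import all_boot all_order all_algebra.
Set Implicit Arguments. Unset Strict Implicit. Unset Printing Implicit Defensive.
Import Order.TTheory GRing.Theory Num.Theory.
Local Open Scope ring_scope.

Section Quintic.
Variable C : numClosedFieldType.
Variables p q r s t : C.

Definition quintic : {poly C} :=
  'X^5 + p%:P * 'X^4 + q%:P * 'X^3 + r%:P * 'X^2 + s%:P * 'X + t%:P.

(* discriminant from a listing of the 5 roots with multiplicity *)
Definition discr5 (a : 'I_5 -> C) : C :=
  \prod_(i < 5) \prod_(j < 5 | (i < j)%N) (a i - a j) ^+ 2.

Definition L3 : C := 2 * p ^+ 2 - 5 * q.

Definition L2 : C :=
  40 * q * s - 16 * p ^+ 2 * s - 8 * r * p ^+ 3 + 38 * r * p * q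
  + 3 * p ^+ 2 * q ^+ 2 - 12 * q ^+ 3 - 45 * r ^+ 2.

Definition L1 : C :=
  - 264 * p * s ^+ 2 * r - 12 * p ^+ 3 * t * q ^+ 2 + 36 * r ^+ 3 * p * q
  - 124 * s * r * p * q ^+ 2 + 28 * s * r * p ^+ 3 * q + 260 * s * p * t * q
  - 132 * p ^+ 2 * q * r * t + 240 * p * r ^+ 2 * t + 234 * s * q * r ^+ 2
  + 32 * p ^+ 4 * t * r + 48 * p * t * q ^+ 3 - 56 * s * p ^+ 3 * t
  - 80 * q ^+ 2 * r * t + 194 * q * s ^+ 2 * p ^+ 2 - 600 * s * t * r
  - 6 * q ^+ 3 * s * p ^+ 2 + 2 * p ^+ 2 * q ^+ 2 * r ^+ 2
  - 12 * s * r ^+ 2 * p ^+ 2 - 54 * r ^+ 4 + 320 * s ^+ 3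
  - 8 * q ^+ 3 * r ^+ 2 - 8 * r ^+ 3 * p ^+ 3 + 250 * q * t ^+ 2
  - 176 * q ^+ 2 * s ^+ 2 + 24 * q ^+ 4 * s - 36 * p ^+ 4 * s ^+ 2
  - 100 * p ^+ 2 * t ^+ 2.
End Quintic.

(* Translating x by b = -p/5 kills the x^4 term: f = (x-b)^5 + Q (x-b)^3 + R (x-b)^2 + S (x-b) + T.
   The invariants L3, L2, L1 are translation invariant and in these coordinates read
   -5 Q, 40 Q S - 12 Q^3 - 45 R^2 and (for Q = R = 0) 320 S^3, so their vanishing forces
   Q = R = S = 0, i.e. f = (x-b)^5 + T.  Such an f has a double root only if T = 0, since a
   double root c satisfies 5 (c-b)^4 = f'(c) = 0. *)
From HB Require Import structures.
From mathcomp Require Import all_boot all_order all_algebra.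
From mathcomp Require Import ring.
Set Implicit Arguments. Unset Strict Implicit. Unset Printing Implicit Defensive.
Import Order.TTheory GRing.Theory Num.Theory.
Local Open Scope ring_scope.

Lemma prod_XsubC_eq_exp_root {R : idomainType} {n} {a : 'I_n -> R} {b : R} {m} :
  \prod_(k < n) ('X - (a k)%:P) = ('X - b%:P) ^+ m -> forall k, a k = b.
Proof.
move=> eq_ab k; apply/eqP; rewrite -subr_eq0.
have := congr1 (horner^~ (a k)) eq_ab; rewrite /= horner_prod.
rewrite (bigD1 k) //= !hornerE subrr mul0r => /esym/eqP.
by rewrite expf_eq0 => /andP[].
Qed.

Lemma prod_XsubC_repeated_root {R : comNzRingType} {n} {a : 'I_n -> R} {i j : 'I_n} :
  i != j -> a i = a j ->
  exists g, \prod_(k < n) ('X - (a k)%:P) = ('X - (a i)%:P) ^+ 2 * g.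
Proof.
move=> neq_ij eq_aij; rewrite (bigD1 i) // (bigD1 j) 1?eq_sym //= -eq_aij.
by eexists; rewrite mulrA expr2.
Qed.

Lemma root_deriv_sqr_XsubC {R : comNzRingType} (c : R) (g : {poly R}) :
  (('X - c%:P) ^+ 2 * g).[c] = 0 /\ (('X - c%:P) ^+ 2 * g)^`().[c] = 0.
Proof.
rewrite derivM deriv_exp derivXsubC mul1r hornerD !hornerM hornerMn !horner_exp.
by rewrite hornerXsubC subrr /= !(expr1, mul0r, mul0rn, add0r).
Qed.

Lemma exp5_addC_repeated_root {R : numDomainType} (b T c : R) (g : {poly R}) :
  ('X - b%:P) ^+ 5 + T%:P = ('X - c%:P) ^+ 2 * g -> T = 0.
Proof.
move=> eq_fg; have [fc0 dfc0] := root_deriv_sqr_XsubC c g; rewrite -eq_fg in fc0 dfc0.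
have cb : c = b.
  move: dfc0; rewrite derivD derivC addr0 deriv_exp derivXsubC mul1r hornerMn.
  rewrite horner_exp hornerXsubC => /eqP; rewrite mulrn_eq0 expf_eq0 subr_eq0 /=.
  by move/eqP.
by move: fc0; rewrite !hornerE cb subrr expr0n add0r.
Qed.

Section Quintic.
Variable C : numClosedFieldType.
Implicit Types b p q r s t Q R S T : C.

Lemma discr5_eq0 (a : 'I_5 -> C) :
  discr5 a = 0 <-> exists i j : 'I_5, (i < j)%N /\ a i = a j.
Proof.
split.
- move/eqP/prodf_eq0 => [i _ /prodf_eq0 [j ij]].
  by rewrite expf_eq0 subr_eq0 => /andP[_ /eqP]; exists i, j.
- move=> [i [j [ij eq_aij]]]; apply/eqP/prodf_eq0; exists i => //.
  by apply/prodf_eq0; exists j => //; rewrite eq_aij subrr expr0n.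
Qed.

Lemma quintic_inj p q r s t p' q' r' s' t' :
  quintic p q r s t = quintic p' q' r' s' t' ->
  [/\ p = p', q = q', r = r', s = s' & t = t'].
Proof.
move=> eq_f; have c k := congr1 (fun P : {poly C} => P`_k) eq_f.
move: (c 4%N) (c 3%N) (c 2%N) (c 1%N) (c 0%N).
by rewrite /quintic !coefE /= !(mulr0, mulr1, addr0, add0r).
Qed.

Lemma XsubC_exp5 b :
  ('X - b%:P) ^+ 5 =
  quintic (- 5 * b) (10 * b ^+ 2) (- 10 * b ^+ 3) (5 * b ^+ 4) (- b ^+ 5).
Proof.
rewrite /quintic !(rmorphD, rmorphM, rmorphN, rmorphXn, rmorph_nat).
by set B := b%:P; ring.
Qed.

Section Shift.
Variables b q r s t : C.

(* Taylor coefficients at b of the quintic with p = -5 b *)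
Definition shiftQ := q - 10 * b ^+ 2.
Definition shiftR := r + 3 * q * b - 20 * b ^+ 3.
Definition shiftS := s + 2 * r * b + 3 * q * b ^+ 2 - 15 * b ^+ 4.
Definition shiftT := t + s * b + r * b ^+ 2 + q * b ^+ 3 - 4 * b ^+ 5.

Lemma quintic_shift :
  quintic (- 5 * b) q r s t =
  ('X - b%:P) ^+ 5 + shiftQ%:P * ('X - b%:P) ^+ 3 + shiftR%:P * ('X - b%:P) ^+ 2
  + shiftS%:P * ('X - b%:P) + shiftT%:P.
Proof.
rewrite /quintic /shiftQ /shiftR /shiftS /shiftT.
rewrite !(rmorphD, rmorphB, rmorphM, rmorphN, rmorphXn, rmorph_nat).
by set B := b%:P; ring.
Qed.

Lemma L3_shift : L3 (- 5 * b) q = - 5 * shiftQ.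
Proof. by rewrite /L3 /shiftQ; ring. Qed.

Lemma L2_shift :
  L2 (- 5 * b) q r s = 40 * shiftQ * shiftS - 12 * shiftQ ^+ 3 - 45 * shiftR ^+ 2.
Proof. by rewrite /L2 /shiftQ /shiftR /shiftS; ring. Qed.

Lemma L1_shift : L1 (- 5 * b) q r s t = L1 0 shiftQ shiftR shiftS shiftT.
Proof. by rewrite /L1 /shiftQ /shiftR /shiftS /shiftT; ring. Qed.

End Shift.

Lemma depressed_invariants_eq0 Q R S T :
  - 5 * Q = 0 -> 40 * Q * S - 12 * Q ^+ 3 - 45 * R ^+ 2 = 0 -> L1 0 Q R S T = 0 ->
  [/\ Q = 0, R = 0 & S = 0].
Proof.
move=> /eqP; rewrite mulf_eq0 oppr_eq0 pnatr_eq0 => /eqP -> {Q}.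
have -> : 40 * 0 * S - 12 * 0 ^+ 3 - 45 * R ^+ 2 = - (45 * R ^+ 2) by ring.
move=> /eqP; rewrite oppr_eq0 mulf_eq0 pnatr_eq0 expf_eq0 => /eqP -> {R}.
have -> : L1 0 0 0 S T = 320 * S ^+ 3 by rewrite /L1; ring.
by move=> /eqP; rewrite mulf_eq0 pnatr_eq0 expf_eq0 => /eqP.
Qed.

End Quintic.

Theorem mainTheorem5 (C : numClosedFieldType) (p q r s t : C)
  (hp : p \is Num.real) (hq : q \is Num.real) (hr : r \is Num.real)
  (hs : s \is Num.real) (ht : t \is Num.real)
  (a : 'I_5 -> C)
  (ha : quintic p q r s t = \prod_(i < 5) ('X - (a i)%:P)) :
  (exists b : C, quintic p q r s t = ('X - b%:P) ^+ 5) <->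
  [/\ discr5 a = 0, L1 p q r s t = 0, L2 p q r s = 0 & L3 p q = 0].
Proof.
split.
- move=> [b hb].
  have ab := prod_XsubC_eq_exp_root (etrans (esym ha) hb).
  have [-> -> -> -> ->] := quintic_inj (etrans hb (XsubC_exp5 b)).
  split; rewrite /L1 /L2 /L3; try ring.
  by apply/discr5_eq0; exists 0, 1; rewrite !ab.
- move=> [/discr5_eq0 [i [j [ij eq_aij]]] h1 h2 h3].
  have [b pb] : exists b, p = - 5 * b by exists (- p / 5); field.
  subst p.
  rewrite L1_shift in h1; rewrite L2_shift in h2; rewrite L3_shift in h3.
  have [Q0 R0 S0] := depressed_invariants_eq0 h3 h2 h1.
  have hf := quintic_shift b q r s t; rewrite Q0 R0 S0 !mul0r !addr0 in hf.
  have neq_ij : i != j by rewrite neq_ltn ij.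
  have [g hg] := prod_XsubC_repeated_root neq_ij eq_aij.
  exists b; rewrite hf (exp5_addC_repeated_root (etrans (esym hf) (etrans ha hg))).
  by rewrite addr0.
Qed.
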